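(* Let $N$ be a finitely generated, semipositive binoid, $T$ an $N$-set generated by $r$ elements, and $\mathfrak n$ an $N_+$-primary ideal of $N$. Let $n_1,\dots,n_s\in N_+$ be such that every element of $N$ is either a unit or of the form $u+a_1n_1+\cdots+a_sn_s$ with $u\in N^\times$, $a_j\in\mathbb N$. Then there is a constant $D$, independent of $q$, such that for every $q\in\mathbb N_+$ the pointed set $T/([q]\mathfrak n+T)$ is finite and $$\#\,T/([q]\mathfrak n+T)\le r|N^\times|+Dq^s.$$
   Context: A binoid $(N,+,0,\infty)$ is a commutative monoid $(N,+,0)$ with an element $\infty$ satisfying $a+\infty=\infty$ for all $a\in N$. Write $N^\times$ for the group of units of $N$ and $N_+=N\setminus N^\times$. $N$ is finitely generated if it is finitely generated as a monoid; semipositive if $N\neq\{\infty\}$ and $N^\times$ is finite. An ideal of $N$ is a nonempty subset $I\subseteq N$ with $I+N\subseteq I$ (so $\infty\in I$). For an ideal $I$ and $q\in\mathbb N_+$, $[q]I$ denotes the ideal generated by $\{qa: a\in I\}$. An ideal $\mathfrak n$ is $N_+$-primary if $\mathfrak n\subseteq N_+$ and for every $a\in N_+$ there is $k\ge1$ with $ka\in\mathfrak n$. An $N$-set is a pointed set $(S,p)$ with a map $N\times S\to S$, $(n,s)\mapsto n+s$, such that $(n+m)+s=n+(m+s)$, $0+s=s$, $\infty+s=p$ and $n+p=p$. It is generated by $s_1,\dots,s_r\in S$ if $S=\bigcup_j (N+s_j)$. For an ideal $J$ and an $N$-set $T$, $J+T=\{a+t:a\in J,t\in T\}$ is an $N$-subset;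 for an $N$-subset $S\subseteq T$, the quotient $T/S$ is the $N$-set $(T\setminus S)\cup\{p\}$. For a finite pointed set $S$ we write $\#S=|S|-1$. *)

From Stdlib Require Import List Arith.
Import ListNotations.

Record binoid := Binoid {
  bcar :> Type;
  badd : bcar -> bcar -> bcar;
  bzero : bcar;
  binf : bcar;
  badd_assoc : forall a b c, badd a (badd b c) = badd (badd a b) c;
  badd_comm : forall a b, badd a b = badd b a;
  badd_0l : forall a, badd bzero a = a;
  badd_infl : forall a, badd binf a = binf
}.

Arguments badd {_} _ _.
Arguments bzero {_}.
Arguments binf {_}.

Section BinoidDefs.
Variable N : binoid.

Fixpoint nsmul (q : nat) (a : N) : N :=
  match q with O => bzero | S k => badd a (nsmul k a) end.

Definition is_unit (a : N) : Prop := exists b : N, badd a b = bzero.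
Definition in_Nplus (a : N) : Prop := ~ is_unit a.

Inductive gen_by (g : list N) : N -> Prop :=
| gen_zero : gen_by g bzero
| gen_step x y : In x g -> gen_by g y -> gen_by g (badd x y).

Definition fin_gen : Prop := exists g : list N, forall x : N, gen_by g x.

Definition semipositive : Prop :=
  (exists a : N, a <> binf) /\
  (exists U : list N, forall u, is_unit u -> In u U).

Definition is_ideal (I : N -> Prop) : Prop :=
  (exists a, I a) /\ (forall a b, I a -> I (badd a b)).

Definition qideal (q : nat) (I : N -> Prop) : N -> Prop :=
  fun x => exists a b, I a /\ x = badd (nsmul q a) b.

Definition Nplus_primary (I : N -> Prop) : Prop :=
  is_ideal I /\ (forall a, I a -> in_Nplus a) /\
  (forall a, in_Nplus a -> exists k, 1 <= k /\ I (nsmul k a)).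

Fixpoint lincomb (a : list nat) (ns : list N) : N :=
  match a, ns with
  | k :: a', n :: ns' => badd (nsmul k n) (lincomb a' ns')
  | _, _ => bzero
  end.
End BinoidDefs.

Arguments nsmul {N}.
Arguments is_unit {N}.
Arguments in_Nplus {N}.
Arguments qideal {N}.
Arguments lincomb {N}.

Record Nset (N : binoid) := NSet {
  scar :> Type;
  spt : scar;
  sact : N -> scar -> scar;
  sact_add : forall n m s, sact (badd n m) s = sact n (sact m s);
  sact_0 : forall s, sact bzero s = s;
  sact_inf : forall s, sact binf s = spt;
  sact_pt : forall n, sact n spt = spt
}.

Arguments spt {N}.
Arguments sact {N}.

Definition Nset_gen_by {N : binoid} (T : Nset N) (g : list T) : Prop :=
  forall t : T, exists n : N, exists s, In s g /\ t = sact T n s.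

Definition ideal_plus {N : binoid} (J : N -> Prop) (T : Nset N) : T -> Prop :=
  fun t => exists a s, J a /\ t = sact T a s.

(* underlying set of the quotient T/S : (T \ S) u {p} *)
Definition quot_mem {N : binoid} (T : Nset N) (S : T -> Prop) : T -> Prop :=
  fun t => ~ S t \/ t = spt T.

(* the pointed set T/S is finite with #(T/S) = |T/S| - 1 = c *)
Definition quot_finite_card {N : binoid} (T : Nset N) (S : T -> Prop) (c : nat)
  : Prop :=
  exists l : list T, NoDup l /\ (forall t, In t l <-> quot_mem T S t) /\
                     c = length l - 1.

(** Choose [K] with [K n ∈ 𝔫] for every [n ∈ ns] (possible since 𝔫 is
    [N_+]-primary).  If some coefficient [a_j] of [x = u + Σ a_j n_j] is at
    least [q K], then [a_j n_j = q (K n_j) + (a_j - q K) n_j ∈ [q]𝔫], so [x]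
    lies in [[q]𝔫].  Hence every element of [T] outside [[q]𝔫 + T] is of the
    form [u + s] or [u + Σ a_j n_j + s] with [u] a unit, [s] a generator of
    [T] and all [a_j < q K]; there are at most [r |N^×| (1 + (q K)^s)] such
    elements. *)

From Stdlib Require Import List Arith Lia Classical.
Import ListNotations.

Lemma nsmul_add (N : binoid) (p m : nat) (x : N) :
  nsmul (p + m) x = badd (nsmul p x) (nsmul m x).
Proof.
  induction p as [|p IH]; simpl.
  - now rewrite badd_0l.
  - now rewrite IH, badd_assoc.
Qed.

Lemma nsmul_mul (N : binoid) (q k : nat) (x : N) :
  nsmul (q * k) x = nsmul q (nsmul k x).
Proof.
  induction q as [|q IH]; simpl; auto.
  now rewrite nsmul_add, IH.
Qed.

Section QIdeal.
Variables (N : binoid) (q : nat) (I : N -> Prop).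

Lemma qideal_addr (x y : N) : qideal q I x -> qideal q I (badd x y).
Proof.
  intros [a [b [Ia ->]]]. exists a, (badd b y). split; auto.
  now rewrite badd_assoc.
Qed.

Lemma qideal_addl (x y : N) : qideal q I x -> qideal q I (badd y x).
Proof. intros Hx. rewrite badd_comm. now apply qideal_addr. Qed.

Lemma qideal_nsmul (k m : nat) (n : N) :
  I (nsmul k n) -> q * k <= m -> qideal q I (nsmul m n).
Proof.
  intros Ik Hm. exists (nsmul k n), (nsmul (m - q * k) n). split; auto.
  rewrite <- nsmul_mul, <- nsmul_add. f_equal. lia.
Qed.

Lemma lincomb_coefs_lt_or_qideal (K : nat) (a : list nat) (ns : list N) :
  length a = length ns ->
  (forall n, In n ns -> exists k, k <= K /\ I (nsmul k n)) ->
  Forall (fun k => k < q * K) a \/ qideal q I (lincomb a ns).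
Proof.
  revert ns. induction a as [|k a IH]; intros [|n ns] Hlen HK;
    simpl in Hlen |- *; try discriminate; [now left|].
  destruct (lt_dec k (q * K)) as [Hlt|Hge].
  - destruct (IH ns ltac:(lia) (fun m Hm => HK m (or_intror Hm))) as [Hsmall|Hq].
    + now left; constructor.
    + now right; apply qideal_addl.
  - right. apply qideal_addr.
    destruct (HK n (or_introl eq_refl)) as [kn [HknK Ikn]].
    apply (qideal_nsmul kn); auto.
    enough (q * kn <= q * K) by lia. now apply Nat.mul_le_mono_l.
Qed.

End QIdeal.

Lemma bounded_witnesses {A : Type} (P : nat -> A -> Prop) (l : list A) :
  (forall x, In x l -> exists k, P k x) ->
  exists K, forall x, In x l -> exists k, k <= K /\ P k x.
Proof.
  induction l as [|a l IH]; intros Hl.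
  - exists 0. intros x [].
  - destruct (IH (fun x Hx => Hl x (or_intror Hx))) as [K HK].
    destruct (Hl a (or_introl eq_refl)) as [ka Pa].
    exists (max K ka). intros x [<-|Hx].
    + exists ka. split; auto. lia.
    + destruct (HK x Hx) as [k [HkK Pk]]. exists k. split; auto. lia.
Qed.

Fixpoint box (m s : nat) : list (list nat) :=
  match s with
  | 0 => [[]]
  | S s' => flat_map (fun i => map (cons i) (box m s')) (seq 0 m)
  end.

Lemma length_box (m s : nat) : length (box m s) = m ^ s.
Proof.
  induction s as [|s IH]; simpl; auto.
  rewrite (flat_map_constant_length (c := m ^ s)), length_seq; auto.
  intros i _. now rewrite length_map.
Qed.

Lemma in_box (m : nat) (a : list nat) :
  Forall (fun k => k < m) a -> In a (box m (length a)).
Proof.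
  induction 1 as [|k a Hk _ IH]; simpl; auto.
  apply in_flat_map. exists k. split.
  - apply in_seq. lia.
  - now apply in_map.
Qed.

Lemma enum_of_cover {A : Type} (L : list A) (P : A -> Prop) :
  (forall x, P x -> In x L) -> exists l, NoDup l /\ forall x, In x l <-> P x.
Proof.
  revert P. induction L as [|a L IH]; intros P HP.
  - exists []. split; [constructor|]. intros x. split; [intros []|].
    intros Px. destruct (HP x Px).
  - destruct (IH (fun x => P x /\ x <> a)) as [l [Hnd Hl]].
    { intros x [Px Hxa]. destruct (HP x Px) as [<-|]; tauto. }
    destruct (classic (P a)) as [Pa|nPa].
    + exists (a :: l). split.
      * constructor; auto. intros Hal. now apply Hl in Hal.
      * intros x. simpl. rewrite Hl. split; [intros [<-|[]]; auto|].
        intros Px. destruct (classic (a = x)); auto.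
    + exists l. split; auto. intros x. rewrite Hl.
      split; [tauto|]. intros Px. split; auto. intros ->. tauto.
Qed.

Lemma quot_finite_card_of_cover {N : binoid} (T : Nset N) (S : T -> Prop)
    (L : list T) :
  (forall t, ~ S t -> In t L) ->
  exists c, quot_finite_card T S c /\ c <= length L.
Proof.
  intros HL.
  destruct (enum_of_cover (spt T :: L) (quot_mem T S)) as [l [Hnd Hl]].
  { intros t [nSt| ->]; simpl; auto. }
  exists (length l - 1). split.
  - now exists l.
  - enough (length l <= length (spt T :: L)) by (simpl in *; lia).
    apply NoDup_incl_length; auto.
    intros t Ht. apply Hl in Ht. destruct Ht as [nSt| ->]; simpl; auto.
Qed.

Definition small_orbit_points {N : binoid} (T : Nset N) (sg : list T)
    (U ns : list N) (m : nat) : list T :=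
  flat_map (fun s => flat_map (fun u => sact T u s ::
      map (fun a => sact T (badd u (lincomb a ns)) s) (box m (length ns))) U) sg.

Lemma length_small_orbit_points {N : binoid} (T : Nset N) (sg : list T)
    (U ns : list N) (m : nat) :
  length (small_orbit_points T sg U ns m) =
    length sg * (length U * (1 + m ^ length ns)).
Proof.
  apply flat_map_constant_length. intros s _.
  apply flat_map_constant_length. intros u _.
  simpl. now rewrite length_map, length_box.
Qed.

Lemma small_orbit_points_cover (N : binoid) (T : Nset N) (sg : list T)
    (nn : N -> Prop) (ns U : list N) (K q : nat) :
  Nset_gen_by T sg -> (forall u, is_unit u -> In u U) ->
  (forall n, In n ns -> exists k, k <= K /\ nn (nsmul k n)) ->
  (forall x : N, is_unit x \/
     exists u a, is_unit u /\ length a = length ns /\ x = badd u (lincomb a ns)) ->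
  forall t, ~ ideal_plus (qideal q nn) T t ->
    In t (small_orbit_points T sg U ns (q * K)).
Proof.
  intros Hgen HU HK Hdec t Ht.
  destruct (Hgen t) as [n [s [Hs ->]]].
  apply in_flat_map. exists s. split; auto.
  apply in_flat_map.
  destruct (Hdec n) as [Hn | [u [a [Hu [Hlen ->]]]]].
  - exists n. simpl. auto.
  - exists u. split; auto. right.
    destruct (lincomb_coefs_lt_or_qideal N q nn K a ns Hlen HK) as [Hsmall|Hq].
    + apply (in_map (fun a => sact T (badd u (lincomb a ns)) s)).
      rewrite <- Hlen. now apply in_box.
    + exfalso. apply Ht. exists (badd u (lincomb a ns)), s. split; auto.
      now apply qideal_addl.
Qed.

Theorem mainTheorem13 (N : binoid) (T : Nset N) (r : nat) (sg : list T)
  (nn : N -> Prop) (ns : list N) (U : list N)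
  (Hfg : fin_gen N) (Hsp : semipositive N)
  (HU : NoDup U /\ forall u, is_unit u <-> In u U)
  (Hr : length sg = r) (Hgen : Nset_gen_by T sg)
  (Hnn : Nplus_primary N nn)
  (Hns : forall n, In n ns -> in_Nplus n)
  (Hdec : forall x : N, is_unit x \/
     exists u a, is_unit u /\ length a = length ns /\ x = badd u (lincomb a ns)) :
  exists D : nat, forall q : nat, 1 <= q ->
    exists c, quot_finite_card T (ideal_plus (qideal q nn) T) c /\
      c <= r * length U + D * q ^ length ns.
Proof.
  destruct Hnn as [_ [_ Hprimary]].
  destruct (bounded_witnesses (fun k n => nn (nsmul k n)) ns) as [K HK].
  { intros n Hn. destruct (Hprimary n (Hns n Hn)) as [k [_ Hk]]. eauto. }
  exists (r * length U * K ^ length ns). intros q _.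
  destruct (quot_finite_card_of_cover T (ideal_plus (qideal q nn) T)
              (small_orbit_points T sg U ns (q * K))) as [c [Hc Hle]].
  { apply small_orbit_points_cover; auto. intros u. apply HU. }
  exists c. split; auto.
  rewrite length_small_orbit_points, Hr, Nat.pow_mul_l in Hle.
  nia.
Qed.
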